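(* For non-zero integers $a,b$ let $f_{a,b}:(0,\infty)\to(0,\infty)$, $f_{a,b}(z)=z^{a/b}$ (real positive branch), and let $I\subseteq(0,\infty)$ have non-empty interior. Then there exist uncountably many $\zeta\in\mathscr{L}\cap I$ such that, for all non-zero integers $a,b$, $f_{a,b}(\zeta)\in\mathscr{L}$ holds if and only if $a/b\in\mathbb{Z}$. In particular, for any fixed coprime non-zero integers $a,b$ with $|b|\geq2$, the set $f_{a,b}(\mathscr{L}\cap(0,\infty))\cap\mathscr{L}$ is uncountable but $f_{a,b}(\mathscr{L}\cap(0,\infty))\not\subseteq\mathscr{L}$.
   Context: $\mathscr{L}$ is the set of Liouville numbers (real irrational $\zeta$ such that for every $\eta>0$ there are infinitely many rationals $y/x$, $x\geq1$, with $|\zeta-y/x|\leq x^{-\eta}$). *)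

From Stdlib Require Import Reals ZArith List.
Open Scope R_scope.

Definition irrational (z : R) : Prop :=
  ~ exists p q : Z, q <> 0%Z /\ z = IZR p / IZR q.

Definition infinite_set (S : R -> Prop) : Prop :=
  ~ exists l : list R, forall q, S q -> In q l.

Definition uncountable (S : R -> Prop) : Prop :=
  ~ exists f : nat -> R, forall x, S x -> exists n, f n = x.

Definition Liouville (z : R) : Prop :=
  irrational z /\
  forall eta : R, 0 < eta ->
    infinite_set (fun q => exists (x y : Z), (1 <= x)%Z /\ q = IZR y / IZR x /\
                     Rabs (z - q) <= Rpower (IZR x) (- eta)).

Definition fab (a b : Z) (z : R) : R := Rpower z (IZR a / IZR b).

Definition nonempty_interior (I : R -> Prop) : Prop :=
  exists c r : R, 0 < r /\ forall x, Rabs (x - c) < r -> I x.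

(* The number [zeta] is the limit of [r n = p n / (2 Q n)] with [p n] and [Q n] odd,
   [Q (S n) = Q n ^ (n + 2)] and [0 < zeta - r n <= 4 / Q (S n)].  Since [Q (S n)] outgrows every
   power of [Q n], the rationals [r n ^ k] approximate [zeta ^ k] to any order, so every non-zero
   integral power of [zeta] is Liouville.  If [zeta ^ (a/b)] with [b] not dividing [a] had a very
   good approximation [u/v], then for the [n] with [Q n <= v^(2b) < Q (S n)] the fractions
   [(u/v)^b] and [r n ^ a] would be closer than distinct fractions with their denominators can be,
   hence equal; but the 2-adic valuation of [(u/v)^b] is a multiple of [b] while that of
   [r n ^ a] is [-a].  Each numerator [p (S n)] may be chosen in two ways, which lets the limit
   avoid the [n]-th term of any given sequence; this gives uncountably many such [zeta] in any
   interval. *)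

From Stdlib Require Import Reals ZArith List Lra Lia Classical ClassicalEpsilon.
Open Scope R_scope.

(** * Real powers and rational approximations *)

Lemma Rpower_pos x s : 0 < Rpower x s.
Proof. apply exp_pos. Qed.

Lemma Rpower_inj x y s : 0 < x -> 0 < y -> s <> 0 -> Rpower x s = Rpower y s -> x = y.
Proof.
  intros hx hy hs h.
  assert (E : Rpower (Rpower x s) (/ s) = Rpower (Rpower y s) (/ s)) by now rewrite h.
  now rewrite !Rpower_mult, Rinv_r, !Rpower_1 in E.
Qed.

Lemma Rpower_le_endpoints m M c t : 0 < m -> m <= c <= M ->
  Rpower c t <= Rpower m t + Rpower M t.
Proof.
  intros hm hc. pose proof (Rpower_pos m t). pose proof (Rpower_pos M t).
  destruct (Rle_dec 0 t) as [ht | ht].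
  - assert (Rpower c t <= Rpower M t) by (apply Rle_Rpower_l; lra). lra.
  - assert (Rpower m (- t) <= Rpower c (- t)) as hle by (apply Rle_Rpower_l; lra).
    rewrite !Rpower_Ropp in hle.
    assert (Rpower c t <= Rpower m t).
    { rewrite <- (Rinv_inv (Rpower c t)), <- (Rinv_inv (Rpower m t)).
      apply Rinv_le_contravar; [apply Rinv_0_lt_compat, Rpower_pos | exact hle]. }
    lra.
Qed.

Lemma Rpower_locally_lipschitz s z : 0 < z -> exists L, 0 < L /\
  forall x y, z / 2 <= x <= 2 * z -> z / 2 <= y <= 2 * z ->
    Rabs (Rpower x s - Rpower y s) <= L * Rabs (x - y).
Proof.
  intros hz. set (K := Rpower (z / 2) (s - 1) + Rpower (2 * z) (s - 1)).
  exists (Rabs s * K + 1). split.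
  { pose proof (Rabs_pos s). pose proof (Rpower_pos (z / 2) (s - 1)).
    pose proof (Rpower_pos (2 * z) (s - 1)). unfold K. nra. }
  intros x y hx hy.
  destruct (MVT_abs (fun t => Rpower t s) (fun t => s * Rpower t (s - 1)) y x)
    as [c [Hc hc]].
  { intros c hc. apply derivable_pt_lim_power.
    assert (Rmin y x > 0) by (apply Rmin_glb_lt; lra). lra. }
  assert (hcz : z / 2 <= c <= 2 * z).
  { split; [apply Rle_trans with (Rmin y x); [apply Rmin_glb|]
           | apply Rle_trans with (Rmax y x); [|apply Rmax_lub]]; lra. }
  assert (hK : Rpower c (s - 1) <= K) by (apply Rpower_le_endpoints; lra).
  rewrite Hc, Rabs_mult, (Rabs_pos_eq (Rpower c _)), (Rabs_minus_sym x y)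
    by (left; apply Rpower_pos).
  pose proof (Rabs_pos s). pose proof (Rabs_pos (y - x)).
  assert (Rabs s * Rpower c (s - 1) <= Rabs s * K + 1) by nra.
  nra.
Qed.

Lemma INR_eventually_gt x : exists N, forall n, (N <= n)%nat -> x < INR n.
Proof.
  destruct (archimed x) as [h _].
  exists (Z.to_nat (up x)). intros n hn. apply le_INR in hn.
  destruct (Z.leb_spec 0 (up x)) as [hu | hu].
  - rewrite INR_IZR_INZ, Z2Nat.id in hn by exact hu. lra.
  - apply IZR_lt in hu. pose proof (pos_INR n). lra.
Qed.

Lemma infinite_set_of_injective (P : R -> Prop) (g : nat -> R) :
  (forall n m, g n = g m -> n = m) -> (forall n, P (g n)) -> infinite_set P.
Proof.
  intros hinj hP [l hl].
  assert (hnd : NoDup (map g (seq 0 (S (length l))))).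
  { apply NoDup_map_NoDup_ForallPairs; [intros a b _ _; apply hinj | apply seq_NoDup]. }
  assert (hincl : incl (map g (seq 0 (S (length l)))) l).
  { intros x hx. apply in_map_iff in hx. destruct hx as [n [<- _]]. apply hl, hP. }
  pose proof (NoDup_incl_length hnd hincl) as H.
  rewrite length_map, length_seq in H. lia.
Qed.

Lemma fractions_eq_of_close (A B C D : Z) : (0 < B)%Z -> (0 < D)%Z ->
  IZR B * IZR D * Rabs (IZR A / IZR B - IZR C / IZR D) < 1 ->
  IZR A / IZR B = IZR C / IZR D.
Proof.
  intros hB hD hclose. apply IZR_lt in hB, hD.
  assert (E : IZR B * IZR D * (IZR A / IZR B - IZR C / IZR D) = IZR (A * D - C * B)).
  { rewrite minus_IZR, !mult_IZR. field. lra. }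
  rewrite <- (Rabs_pos_eq (IZR B * IZR D)), <- Rabs_mult, E, Rabs_Zabs in hclose by nra.
  apply lt_IZR in hclose.
  assert (Hz : IZR (A * D - C * B) = 0) by (f_equal; lia).
  rewrite <- E in Hz. apply Rmult_integral in Hz as [Hz | Hz]; [nra | lra].
Qed.

Lemma Rpower_neg_le_1 x e : 1 <= x -> 0 <= e -> Rpower x (- e) <= 1.
Proof. intros. rewrite <- (Rpower_O x) by lra. apply Rle_Rpower; lra. Qed.

Definition zrange (lo : Z) (len : nat) : list Z :=
  map (fun i => (lo + Z.of_nat i)%Z) (seq 0 len).

Lemma in_zrange lo len z : (lo <= z < lo + Z.of_nat len)%Z -> In z (zrange lo len).
Proof.
  intros h. apply in_map_iff. exists (Z.to_nat (z - lo)).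
  split; [lia | apply in_seq; lia].
Qed.

(* Only finitely many fractions with denominator at most [V] lie within distance 1 of [y]. *)
Lemma approximations_large_den y eta V : 0 <= eta ->
  infinite_set (fun q => exists x u : Z, (1 <= x)%Z /\ q = IZR u / IZR x /\
                   Rabs (y - q) <= Rpower (IZR x) (- eta)) ->
  exists x u : Z, (V < x)%Z /\ Rabs (y - IZR u / IZR x) <= Rpower (IZR x) (- eta).
Proof.
  intros heta hinf. apply NNPP. intros hno. apply hinf.
  set (U := up (IZR (Z.abs V) * (Rabs y + 1))).
  exists (flat_map (fun x => map (fun u => IZR u / IZR x) (zrange (- U) (Z.to_nat (2 * U + 1))))
                   (zrange 1 (Z.to_nat V))).
  intros q [x [u [hx [-> hq]]]].
  assert (hxV : (x <= V)%Z) by (apply Z.nlt_ge; intros hVx; apply hno; now exists x, u).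
  apply in_flat_map. exists x. split; [apply in_zrange; lia|].
  apply in_map_iff. exists u. split; [reflexivity|].
  assert (hx1 : 1 <= IZR x) by (apply IZR_le; lia).
  pose proof (Rpower_neg_le_1 (IZR x) eta hx1 heta).
  assert (hu : Rabs (IZR u) <= IZR x * (Rabs y + 1)).
  { replace (IZR u) with (IZR x * (IZR u / IZR x)) by (field; lra).
    rewrite Rabs_mult, Rabs_pos_eq by lra. apply Rmult_le_compat_l; [lra|].
    pose proof (Rabs_triang_inv (IZR u / IZR x) y). rewrite Rabs_minus_sym in hq. lra. }
  assert (IZR x <= IZR (Z.abs V)) by (apply IZR_le; lia).
  destruct (archimed (IZR (Z.abs V) * (Rabs y + 1))) as [hU _]. fold U in hU.
  assert (IZR x * (Rabs y + 1) <= IZR (Z.abs V) * (Rabs y + 1))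
    by (apply Rmult_le_compat_r; pose proof (Rabs_pos y); lra).
  assert (Rabs (IZR u) < IZR U) as hlt by lra.
  rewrite Rabs_Zabs in hlt. apply lt_IZR in hlt.
  apply in_zrange. lia.
Qed.

Lemma approximation_near y eta (u v : Z) : 0 < y -> 1 <= eta -> (1 <= v)%Z -> 2 / y < IZR v ->
  Rabs (y - IZR u / IZR v) <= Rpower (IZR v) (- eta) ->
  y / 2 <= IZR u / IZR v <= 2 * y /\ (0 < u)%Z.
Proof.
  intros hy heta hv1 hv happ. apply IZR_le in hv1.
  assert (hinv : Rpower (IZR v) (- eta) <= / IZR v).
  { rewrite <- (Rpower_1 (IZR v)) at 2 by lra. rewrite <- Rpower_Ropp.
    apply Rle_Rpower; lra. }
  assert (hyv : / IZR v <= y / 2).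
  { apply Rmult_le_reg_r with (IZR v); [lra|]. rewrite Rinv_l by lra.
    assert (2 / y * y = 2) by (field; lra). nra. }
  pose proof (Rle_abs (y - IZR u / IZR v)).
  pose proof (Rle_abs (- (y - IZR u / IZR v))). rewrite Rabs_Ropp in *.
  assert (hq : y / 2 <= IZR u / IZR v <= 2 * y) by lra.
  split; [exact hq|].
  apply lt_IZR. replace (IZR u) with (IZR u / IZR v * IZR v) by (field; lra). nra.
Qed.

(** * 2-adic valuations and powers of fractions *)

Lemma odd_pow_nat o n : Z.odd o = true -> Z.odd (o ^ Z.of_nat n) = true.
Proof. intros h. destruct n; [reflexivity|]. rewrite Z.odd_pow; [exact h | lia]. Qed.

Lemma two_adic_decomposition z : z <> 0%Z ->
  exists i o, z = (2 ^ Z.of_nat i * o)%Z /\ Z.odd o = true.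
Proof.
  remember (Z.abs_nat z) as m eqn:hm. revert z hm.
  induction m as [m IH] using lt_wf_ind. intros z hm hz.
  destruct (Z.odd z) eqn:hodd.
  - exists 0%nat, z. split; [lia | exact hodd].
  - pose proof (Z.div2_odd z) as hd. rewrite hodd in hd. cbn [Z.b2z] in hd.
    destruct (IH (Z.abs_nat (Z.div2 z)) ltac:(lia) (Z.div2 z) eq_refl ltac:(lia))
      as [i [o [ho hoo]]].
    exists (S i), o. split; [|exact hoo].
    rewrite Nat2Z.inj_succ, Z.pow_succ_r by lia. lia.
Qed.

Lemma two_adic_unique i j o o' : Z.odd o = true -> Z.odd o' = true ->
  (2 ^ Z.of_nat i * o = 2 ^ Z.of_nat j * o')%Z -> i = j.
Proof.
  revert j o o'.
  induction i as [|i IH]; intros [|j] o o' ho ho' E; try reflexivity.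
  - rewrite Nat2Z.inj_succ, Z.pow_succ_r in E by lia.
    assert (Z.odd o = Z.odd (2 * (2 ^ Z.of_nat j * o'))) as hp by (f_equal; lia).
    rewrite Z.odd_mul in hp. simpl in hp. congruence.
  - rewrite Nat2Z.inj_succ, Z.pow_succ_r in E by lia.
    assert (Z.odd o' = Z.odd (2 * (2 ^ Z.of_nat i * o))) as hp by (f_equal; lia).
    rewrite Z.odd_mul in hp. simpl in hp. congruence.
  - rewrite !Nat2Z.inj_succ, !Z.pow_succ_r in E by lia.
    f_equal. apply (IH j o o'); [exact ho | exact ho' | lia].
Qed.

(* Comparing 2-adic valuations: [B * val u + A = B * val v]. *)
Lemma dvd_of_pow_two_balance (A B : nat) (u v m m' : Z) :
  u <> 0%Z -> v <> 0%Z -> Z.odd m = true -> Z.odd m' = true ->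
  (u ^ Z.of_nat B * (2 ^ Z.of_nat A * m) = v ^ Z.of_nat B * m')%Z -> Nat.divide B A.
Proof.
  intros hu hv hm hm' E.
  destruct (two_adic_decomposition u hu) as [i [o [-> ho]]].
  destruct (two_adic_decomposition v hv) as [j [o' [-> ho']]].
  assert (hval : (i * B + A)%nat = (j * B)%nat).
  { apply (two_adic_unique _ _ (o ^ Z.of_nat B * m) (o' ^ Z.of_nat B * m'));
      [rewrite Z.odd_mul, odd_pow_nat, hm; auto | rewrite Z.odd_mul, odd_pow_nat, hm'; auto |].
    rewrite Nat2Z.inj_add, !Nat2Z.inj_mul, !Z.pow_add_r, !Z.pow_mul_r by lia.
    rewrite !Z.pow_mul_l in E. lia. }
  exists (j - i)%nat. rewrite Nat.mul_sub_distr_r. lia.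
Qed.

Definition ratpow_num (x y a : Z) : Z :=
  if (0 <=? a)%Z then (x ^ Z.of_nat (Z.abs_nat a))%Z else (y ^ Z.of_nat (Z.abs_nat a))%Z.
Definition ratpow_den (x y a : Z) : Z :=
  if (0 <=? a)%Z then (y ^ Z.of_nat (Z.abs_nat a))%Z else (x ^ Z.of_nat (Z.abs_nat a))%Z.

Lemma ratpow_den_pos x y a : (0 < x)%Z -> (0 < y)%Z -> (0 < ratpow_den x y a)%Z.
Proof. intros. unfold ratpow_den. destruct (0 <=? a)%Z; apply Z.pow_pos_nonneg; lia. Qed.

Lemma Rpower_ratio_IZR x y a : (0 < x)%Z -> (0 < y)%Z ->
  Rpower (IZR x / IZR y) (IZR a) = IZR (ratpow_num x y a) / IZR (ratpow_den x y a).
Proof.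
  intros hx hy. apply IZR_lt in hx, hy.
  assert (hxy : 0 < IZR x / IZR y) by (apply Rdiv_lt_0_compat; assumption).
  assert (hdiv : forall n, (IZR x / IZR y) ^ n = IZR x ^ n / IZR y ^ n)
    by (intros n; unfold Rdiv; rewrite Rpow_mult_distr, pow_inv; reflexivity).
  unfold ratpow_num, ratpow_den.
  destruct (Z.leb_spec 0 a); rewrite <- !pow_IZR.
  - replace (IZR a) with (INR (Z.abs_nat a))
      by (rewrite INR_IZR_INZ, Zabs2Nat.id_abs, Z.abs_eq; auto).
    rewrite Rpower_pow by exact hxy. apply hdiv.
  - replace (IZR a) with (- INR (Z.abs_nat a))
      by (rewrite INR_IZR_INZ, Zabs2Nat.id_abs, Z.abs_neq, opp_IZR by lia; ring).
    rewrite Rpower_Ropp, Rpower_pow, hdiv by exact hxy.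
    field. split; apply pow_nonzero; lra.
Qed.

Lemma ratio_integral_iff_divide a b : b <> 0%Z ->
  (exists k, IZR a / IZR b = IZR k) <-> (b | a)%Z.
Proof.
  intros hb. apply not_0_IZR in hb. split.
  - intros [k hk]. exists k. apply eq_IZR. rewrite mult_IZR, <- hk. field. exact hb.
  - intros [k ->]. exists k. rewrite mult_IZR. field. exact hb.
Qed.

(* The power of 2 in the denominator [2q] of the right-hand side forces [b | a]. *)
Lemma divide_of_Rpower_eq (u v p q a b : Z) : (0 < u)%Z -> (0 < v)%Z -> (0 < p)%Z -> (0 < q)%Z ->
  Z.odd p = true -> Z.odd q = true -> (0 < b)%Z ->
  Rpower (IZR u / IZR v) (IZR b) = Rpower (IZR p / IZR (2 * q)) (IZR a) -> (b | a)%Z.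
Proof.
  intros hu hv hp hq hpo hqo hb E.
  rewrite !Rpower_ratio_IZR in E by lia.
  pose proof (ratpow_den_pos u v b hu hv) as hd1.
  pose proof (ratpow_den_pos p (2 * q) a hp ltac:(lia)) as hd2.
  assert (hcross : (ratpow_num u v b * ratpow_den p (2 * q) a
                    = ratpow_num p (2 * q) a * ratpow_den u v b)%Z).
  { apply IZR_lt in hd1, hd2. apply eq_IZR. rewrite !mult_IZR.
    apply (Rmult_eq_reg_r (/ (IZR (ratpow_den u v b) * IZR (ratpow_den p (2 * q) a))));
      [| apply Rinv_neq_0_compat; nra].
    transitivity (IZR (ratpow_num u v b) / IZR (ratpow_den u v b)); [field; lra|].
    rewrite E. field. lra. }
  unfold ratpow_num, ratpow_den in hcross.
  destruct (Z.leb_spec 0 b); [|lia].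
  rewrite !Z.pow_mul_l in hcross.
  assert (hdiv : Nat.divide (Z.abs_nat b) (Z.abs_nat a)).
  { destruct (Z.leb_spec 0 a).
    - apply (dvd_of_pow_two_balance _ _ u v (q ^ Z.of_nat (Z.abs_nat a)) (p ^ Z.of_nat (Z.abs_nat a)));
        try lia; apply odd_pow_nat; assumption.
    - apply (dvd_of_pow_two_balance _ _ v u (q ^ Z.of_nat (Z.abs_nat a)) (p ^ Z.of_nat (Z.abs_nat a)));
        try lia; apply odd_pow_nat; assumption. }
  apply Z.divide_abs_l, Z.divide_abs_r.
  destruct hdiv as [k hk]. exists (Z.of_nat k). lia.
Qed.

Lemma error_small_of_large_den (V D L c : R) (A B : nat) :
  1 <= V -> 0 < L -> 0 < c -> 2 * L * c < V -> 0 <= D <= c * V ^ (2 * B * A) ->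
  V ^ B * D * (L * / V ^ (B + 2 * B * A + 1)) < / 2.
Proof.
  intros hV hL hc hLV hD.
  assert (hVB : 0 < V ^ B) by (apply pow_lt; lra).
  assert (hVA : 0 < V ^ (2 * B * A)) by (apply pow_lt; lra).
  rewrite !pow_add, pow_1.
  replace (V ^ B * D * (L * / (V ^ B * V ^ (2 * B * A) * V)))
    with (D * L / (V ^ (2 * B * A) * V)) by (field; lra).
  apply Rmult_lt_reg_r with (V ^ (2 * B * A) * V); [nra|].
  unfold Rdiv. rewrite Rmult_assoc, Rinv_l, Rmult_1_r by nra.
  assert (D * L <= c * V ^ (2 * B * A) * L) by (apply Rmult_le_compat_r; lra).
  nra.
Qed.

(* [P^2 < S] and [Y^2 <= S] for [Y = 8 L c X] give [P Y < S]; combine with [e <= 4 / S]. *)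
Lemma error_small_of_fast_growth (P D L c X S e : R) :
  0 <= P -> 0 <= L -> 0 <= c -> 0 <= X -> 0 <= e -> e * S <= 4 ->
  0 <= D <= c * X -> (8 * L * c * X) ^ 2 <= S -> P ^ 2 < S ->
  P * D * (L * e) < / 2.
Proof.
  intros hP hL hc hX he heS hD hY hPS.
  set (Y := 8 * L * c * X) in *.
  assert (hY0 : 0 <= Y) by (unfold Y; repeat apply Rmult_le_pos; lra).
  assert (hS : 0 < S) by nra.
  assert (hPY : P * Y < S).
  { destruct (Rlt_le_dec (P * Y) S) as [h | h]; [exact h|].
    assert (S * S <= (P * Y) * (P * Y)) by nra. nra. }
  assert (P * D * (L * e) <= P * Y / 8 * e).
  { unfold Y. assert (0 <= P * L * e) by (repeat apply Rmult_le_pos; lra). nra. }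
  assert (P * Y / 8 * e * S <= P * Y / 2) by (assert (0 <= P * Y) by nra; nra).
  nra.
Qed.

Lemma fraction_pos_den c d : d <> 0%Z ->
  exists c' d', (0 < d')%Z /\ IZR c / IZR d = IZR c' / IZR d'.
Proof.
  intros hd. destruct (Z_lt_le_dec 0 d) as [h | h].
  - now exists c, d.
  - exists (- c)%Z, (- d)%Z. split; [lia|].
    rewrite !opp_IZR. field. apply not_0_IZR. exact hd.
Qed.

(** * Limits of fast converging fractions with even denominators *)

Definition integral_power_Liouville (zeta : R) : Prop :=
  Liouville zeta /\ 0 < zeta /\
  forall a b : Z, a <> 0%Z -> b <> 0%Z ->
    (Liouville (fab a b zeta) <-> exists k : Z, IZR a / IZR b = IZR k).

Section LiouvilleCriterion.

Variables (p Q : nat -> Z) (zeta : R).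

Definition approx n := IZR (p n) / IZR (2 * Q n).

Hypothesis p_pos : forall n, (0 < p n)%Z.
Hypothesis p_odd : forall n, Z.odd (p n) = true.
Hypothesis Q_odd : forall n, Z.odd (Q n) = true.
Hypothesis Q_ge : forall n, INR (S n) <= IZR (Q n).
Hypothesis Q_le_succ : forall n, (Q n <= Q (S n))%Z.
Hypothesis Q_fast : forall (T : nat) (K : R),
  exists N, forall n, (N <= n)%nat -> K * IZR (Q n) ^ T <= IZR (Q (S n)).
Hypothesis approx_lt_succ : forall n, approx n < approx (S n).
Hypothesis approx_lt : forall n, approx n < zeta.
Hypothesis approx_error : forall n, zeta - approx n <= 4 / IZR (Q (S n)).

Lemma Q_ge_1 n : 1 <= IZR (Q n).
Proof. pose proof (Q_ge n). rewrite S_INR in *. pose proof (pos_INR n). lra. Qed.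

Lemma Q_pos n : (0 < Q n)%Z.
Proof. apply lt_IZR. pose proof (Q_ge_1 n). lra. Qed.

Lemma Q_le n m : (n <= m)%nat -> (Q n <= Q m)%Z.
Proof. induction 1 as [|m _ IH]; [lia | pose proof (Q_le_succ m); lia]. Qed.

Lemma approx_pos n : 0 < approx n.
Proof. apply Rdiv_lt_0_compat; apply IZR_lt; [apply p_pos | pose proof (Q_pos n); lia]. Qed.

Lemma zeta_pos : 0 < zeta.
Proof. pose proof (approx_pos 0). pose proof (approx_lt 0). lra. Qed.

Lemma approx_inj n m : approx n = approx m -> n = m.
Proof.
  intros h.
  assert (mono : forall i j, (i < j)%nat -> approx i < approx j).
  { induction 1 as [|j _ IH]; [|pose proof (approx_lt_succ j)]; auto; lra. }
  destruct (Nat.lt_trichotomy n m) as [H | [H | H]];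
    [apply mono in H | exact H | apply mono in H]; lra.
Qed.

(* The next denominator [Q (S n)] beats any power of [Q n], so the errors [<= 4 / Q (S n)] do too. *)
Lemma approx_error_fast T C : 0 <= C ->
  exists N, forall n, (N <= n)%nat -> C * IZR (Q n) ^ T * (zeta - approx n) < 1.
Proof.
  intros hC. destruct (Q_fast T (4 * C + 1)) as [N HN].
  exists N. intros n hn. specialize (HN n hn).
  pose proof (approx_error n). pose proof (approx_lt n). pose proof (Q_ge_1 (S n)).
  assert (he : (zeta - approx n) * IZR (Q (S n)) <= 4).
  { apply Rmult_le_reg_r with (/ IZR (Q (S n))); [apply Rinv_0_lt_compat; lra|].
    rewrite Rmult_assoc, Rinv_r by lra. lra. }
  assert (hQT : 1 <= IZR (Q n) ^ T) by (apply pow_R1_Rle, Q_ge_1).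
  assert (C * (zeta - approx n) * ((4 * C + 1) * IZR (Q n) ^ T)
          <= C * (zeta - approx n) * IZR (Q (S n)))
    by (apply Rmult_le_compat_l; [apply Rmult_le_pos|]; lra).
  nra.
Qed.

(* Both [p n] and [2 * Q n] are at most [scale * Q n]. *)
Definition scale := 2 * zeta + 2.

Definition pow_num a n := ratpow_num (p n) (2 * Q n) a.
Definition pow_den a n := ratpow_den (p n) (2 * Q n) a.

Lemma approx_pow_eq a n : Rpower (approx n) (IZR a) = IZR (pow_num a n) / IZR (pow_den a n).
Proof. apply Rpower_ratio_IZR; [apply p_pos | pose proof (Q_pos n); lia]. Qed.

Lemma pow_den_pos a n : (0 < pow_den a n)%Z.
Proof. apply ratpow_den_pos; [apply p_pos | pose proof (Q_pos n); lia]. Qed.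

Lemma pow_den_le a n : IZR (pow_den a n) <= (scale * IZR (Q n)) ^ Z.abs_nat a.
Proof.
  pose proof (Q_ge_1 n). pose proof zeta_pos. pose proof (p_pos n) as hp. apply IZR_lt in hp.
  assert (hpQ : IZR (p n) <= scale * IZR (Q n)).
  { pose proof (approx_lt n) as h. unfold approx in h. rewrite mult_IZR in h.
    apply Rmult_lt_compat_r with (r := 2 * IZR (Q n)) in h; [|lra].
    replace (IZR (p n) / (2 * IZR (Q n)) * (2 * IZR (Q n))) with (IZR (p n)) in h
      by (field; lra).
    unfold scale. nra. }
  unfold pow_den, ratpow_den. destruct (0 <=? a)%Z; rewrite <- pow_IZR; apply pow_incr;
    rewrite ?mult_IZR; unfold scale in *; split; nra.
Qed.

Lemma approx_pow_error k : exists L N, 0 < L /\ forall n, (N <= n)%nat ->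
  Rabs (Rpower zeta (IZR k) - Rpower (approx n) (IZR k)) <= L * (zeta - approx n).
Proof.
  pose proof zeta_pos as hz.
  destruct (Rpower_locally_lipschitz (IZR k) zeta hz) as [L [hL Hlip]].
  destruct (approx_error_fast 0 (2 / zeta)) as [N HN]; [left; apply Rdiv_lt_0_compat; lra|].
  exists L, N. split; [exact hL|]. intros n hn.
  specialize (HN n hn). rewrite pow_O, Rmult_1_r in HN. pose proof (approx_lt n).
  assert (zeta - approx n < zeta / 2).
  { apply Rmult_lt_reg_l with (2 / zeta); [apply Rdiv_lt_0_compat; lra|].
    replace (2 / zeta * (zeta / 2)) with 1 by (field; lra). exact HN. }
  rewrite <- (Rabs_pos_eq (zeta - approx n)) by lra. apply Hlip; lra.
Qed.

Lemma approx_pow_fast k M C : 0 <= C -> exists N, forall n, (N <= n)%nat ->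
  C * IZR (pow_den k n) ^ M * Rabs (Rpower zeta (IZR k) - Rpower (approx n) (IZR k)) < 1.
Proof.
  intros hC. set (A := Z.abs_nat k).
  assert (hs : 0 < scale) by (unfold scale; pose proof zeta_pos; lra).
  destruct (approx_pow_error k) as [L [N1 [hL Herr]]].
  destruct (approx_error_fast (A * M) (C * L * scale ^ (A * M))) as [N2 HN2].
  { apply Rmult_le_pos; [nra | apply pow_le; lra]. }
  exists (max N1 N2). intros n hn.
  specialize (Herr n ltac:(lia)). specialize (HN2 n ltac:(lia)).
  pose proof (pow_den_pos k n) as hD. apply IZR_lt in hD.
  assert (hDM : IZR (pow_den k n) ^ M <= scale ^ (A * M) * IZR (Q n) ^ (A * M)).
  { rewrite <- Rpow_mult_distr, pow_mult. apply pow_incr. split; [lra | apply pow_den_le]. }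
  pose proof (Rabs_pos (Rpower zeta (IZR k) - Rpower (approx n) (IZR k))).
  pose proof (pow_le (IZR (pow_den k n)) M ltac:(lra)).
  assert (C * IZR (pow_den k n) ^ M <= C * (scale ^ (A * M) * IZR (Q n) ^ (A * M)))
    by (apply Rmult_le_compat_l; lra).
  assert (0 <= C * (scale ^ (A * M) * IZR (Q n) ^ (A * M)))
    by (pose proof (pow_le scale (A * M)); pose proof (pow_le (IZR (Q n)) (A * M));
        pose proof (Q_ge_1 n); apply Rmult_le_pos; [|apply Rmult_le_pos]; lra).
  nra.
Qed.

Lemma Liouville_int_pow k : k <> 0%Z -> Liouville (Rpower zeta (IZR k)).
Proof.
  intros hk. pose proof zeta_pos as hz.
  assert (hk0 : IZR k <> 0) by (apply not_0_IZR; exact hk).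
  assert (hne : forall n, Rpower (approx n) (IZR k) <> Rpower zeta (IZR k)).
  { intros n h. apply Rpower_inj in h; [|apply approx_pos | exact hz | exact hk0].
    pose proof (approx_lt n). lra. }
  split.
  - intros [c [d [hd E]]].
    destruct (fraction_pos_den c d hd) as [c' [d' [hd' E']]]. rewrite E' in E.
    destruct (approx_pow_fast k 1 (IZR d')) as [N HN]; [apply IZR_le; lia|].
    apply (hne N). rewrite approx_pow_eq, E. symmetry.
    apply fractions_eq_of_close; [exact hd' | apply pow_den_pos|].
    specialize (HN N (le_n N)). rewrite pow_1 in HN.
    rewrite <- E, <- approx_pow_eq. exact HN.
  - intros eta heta.
    destruct (INR_eventually_gt eta) as [M HM]. specialize (HM M (le_n M)).
    destruct (approx_pow_fast k M 1) as [N HN]; [lra|].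
    apply (infinite_set_of_injective _ (fun m => Rpower (approx (N + m)) (IZR k))).
    { intros i j h. apply Rpower_inj, approx_inj in h; [lia | apply approx_pos ..| exact hk0]. }
    intros m. set (n := (N + m)%nat). specialize (HN n ltac:(unfold n; lia)).
    pose proof (pow_den_pos k n) as hD.
    exists (pow_den k n), (pow_num k n). split; [lia|]. split; [apply approx_pow_eq|].
    assert (hD1 : 1 <= IZR (pow_den k n)) by (apply IZR_le; lia).
    assert (hpow : Rpower (IZR (pow_den k n)) eta <= IZR (pow_den k n) ^ M)
      by (rewrite <- Rpower_pow by lra; apply Rle_Rpower; lra).
    pose proof (Rpower_pos (IZR (pow_den k n)) eta).
    rewrite Rpower_Ropp. apply Rmult_le_reg_l with (Rpower (IZR (pow_den k n)) eta); [lra|].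
    rewrite Rinv_r by lra.
    pose proof (Rabs_pos (Rpower zeta (IZR k) - Rpower (approx n) (IZR k))). nra.
Qed.

Lemma Q_bracket N X : IZR (Q N) <= X ->
  exists n, (N <= n)%nat /\ IZR (Q n) <= X < IZR (Q (S n)).
Proof.
  intros hN.
  destruct (INR_eventually_gt X) as [m Hm]. specialize (Hm m (le_n m)).
  assert (hm : X < IZR (Q m)) by (pose proof (Q_ge m); rewrite S_INR in *; lra).
  clear Hm. induction m as [|m IH].
  - pose proof (Q_le 0 N ltac:(lia)) as h. apply IZR_le in h. lra.
  - destruct (Rlt_le_dec X (IZR (Q m))) as [h | h]; [exact (IH h)|].
    exists m. split; [|lra].
    apply Nat.nlt_ge. intros hmN.
    pose proof (Q_le (S m) N hmN) as h'. apply IZR_le in h'. lra.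
Qed.

Lemma approx_pow_eq_of_close (a b u v : Z) (n : nat) (L1 L2 : R) :
  (0 < b)%Z -> (0 < u)%Z -> (1 <= v)%Z -> 0 < L1 -> 0 < L2 ->
  Rabs (Rpower zeta (IZR a) - Rpower (approx n) (IZR a)) <= L1 * (zeta - approx n) ->
  (8 * L1 * scale ^ Z.abs_nat a) ^ 2 * IZR (Q n) ^ (2 * Z.abs_nat a) <= IZR (Q (S n)) ->
  2 * L2 * scale ^ Z.abs_nat a < IZR v ->
  Rabs (Rpower (IZR u / IZR v) (IZR b) - Rpower zeta (IZR a))
    <= L2 * / IZR v ^ (Z.abs_nat b + 2 * Z.abs_nat b * Z.abs_nat a + 1) ->
  IZR (Q n) <= IZR v ^ (2 * Z.abs_nat b) < IZR (Q (S n)) ->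
  Rpower (IZR u / IZR v) (IZR b) = Rpower (approx n) (IZR a).
Proof.
  intros hb hu hv hL1 hL2 herr hfast hvL hclose [hQn hQSn].
  set (A := Z.abs_nat a) in *. set (B := Z.abs_nat b) in *.
  set (e := zeta - approx n) in *.
  assert (he : 0 <= e) by (pose proof (approx_lt n); unfold e; lra).
  apply IZR_le in hv as hvR.
  assert (hs : 0 < scale ^ A) by (apply pow_lt; unfold scale; pose proof zeta_pos; lra).
  pose proof (Q_ge_1 n) as hQ1. pose proof (Q_ge_1 (S n)) as hQS1.
  rewrite Rpower_ratio_IZR, approx_pow_eq in * by lia.
  apply fractions_eq_of_close; [apply ratpow_den_pos; lia | apply pow_den_pos |].
  assert (hden : IZR (ratpow_den u v b) = IZR v ^ B).
  { unfold ratpow_den. destruct (Z.leb_spec 0 b); [|lia]. apply eq_sym, pow_IZR. }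
  rewrite hden.
  set (D := IZR (pow_den a n)).
  assert (hD0 : 0 <= D) by (pose proof (pow_den_pos a n) as h; apply IZR_lt in h; unfold D; lra).
  assert (hD : D <= scale ^ A * IZR (Q n) ^ A) by (rewrite <- Rpow_mult_distr; apply pow_den_le).
  assert (hQA : IZR (Q n) ^ A <= IZR v ^ (2 * B * A))
    by (rewrite pow_mult; apply pow_incr; lra).
  assert (hsum : Rabs (IZR (ratpow_num u v b) / IZR v ^ B - IZR (pow_num a n) / D)
                 <= L2 * / IZR v ^ (B + 2 * B * A + 1) + L1 * e).
  { rewrite <- hden.
    replace (_ - _) with ((IZR (ratpow_num u v b) / IZR (ratpow_den u v b) - Rpower zeta (IZR a))
                          + (Rpower zeta (IZR a) - IZR (pow_num a n) / D)) by ring.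
    eapply Rle_trans; [apply Rabs_triang | apply Rplus_le_compat; assumption]. }
  assert (h1 : IZR v ^ B * D * (L2 * / IZR v ^ (B + 2 * B * A + 1)) < / 2).
  { apply (error_small_of_large_den _ _ _ (scale ^ A)); try lra.
    split; [exact hD0|]. apply Rle_trans with (1 := hD). apply Rmult_le_compat_l; lra. }
  assert (h2 : IZR v ^ B * D * (L1 * e) < / 2).
  { apply (error_small_of_fast_growth _ _ _ (scale ^ A) (IZR (Q n) ^ A) (IZR (Q (S n))));
      try lra; try (apply pow_le; lra).
    - pose proof (approx_error n) as h. unfold e.
      apply Rmult_le_reg_r with (/ IZR (Q (S n))); [apply Rinv_0_lt_compat; lra|].
      rewrite Rmult_assoc, Rinv_r by lra. lra.
    - rewrite Rpow_mult_distr, <- pow_mult, Nat.mul_comm. exact hfast.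
    - rewrite <- pow_mult, Nat.mul_comm. exact hQSn. }
  pose proof (pow_le (IZR v) B ltac:(lra)).
  assert (0 <= IZR v ^ B * D) by (apply Rmult_le_pos; lra).
  apply Rle_lt_trans with (IZR v ^ B * D * (L2 * / IZR v ^ (B + 2 * B * A + 1) + L1 * e));
    [apply Rmult_le_compat_l; assumption | lra].
Qed.

Lemma not_Liouville_ratio_pow a b : a <> 0%Z -> (0 < b)%Z -> ~ (b | a)%Z ->
  ~ Liouville (Rpower zeta (IZR a / IZR b)).
Proof.
  intros ha hb hndiv [_ HL].
  set (y := Rpower zeta (IZR a / IZR b)).
  assert (hy : 0 < y) by apply Rpower_pos.
  assert (hyb : Rpower y (IZR b) = Rpower zeta (IZR a)).
  { unfold y. rewrite Rpower_mult. f_equal. field. apply not_0_IZR. lia. }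
  set (A := Z.abs_nat a). set (B := Z.abs_nat b).
  destruct (Rpower_locally_lipschitz (IZR b) y hy) as [L2 [hL2 Hlip]].
  destruct (approx_pow_error a) as [L1 [N1 [hL1 Herr]]].
  destruct (Q_fast (2 * A) ((8 * L1 * scale ^ A) ^ 2)) as [N2 Hfast].
  set (N := max N1 N2).
  set (eta := INR (B + 2 * B * A + 1)).
  assert (heta : 1 <= eta) by (unfold eta; rewrite <- INR_1; apply le_INR; lia).
  set (V0 := Z.max (Q N) (up (2 / y + 2 * L2 * scale ^ A))).
  destruct (approximations_large_den y eta V0 ltac:(lra) (HL eta ltac:(lra)))
    as [v [u [hv happ]]].
  assert (hvbig : 2 / y + 2 * L2 * scale ^ A < IZR v /\ IZR (Q N) < IZR v).
  { destruct (archimed (2 / y + 2 * L2 * scale ^ A)) as [hup _].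
    assert (IZR (up (2 / y + 2 * L2 * scale ^ A)) <= IZR V0) by (apply IZR_le; lia).
    assert (IZR (Q N) <= IZR V0) by (apply IZR_le; lia).
    apply IZR_lt in hv. lra. }
  pose proof (Q_ge_1 N).
  assert (hs : 0 < scale ^ A) by (apply pow_lt; unfold scale; pose proof zeta_pos; lra).
  assert (0 <= 2 * L2 * scale ^ A) by (apply Rmult_le_pos; lra).
  assert (hv1 : (1 <= v)%Z) by (apply le_IZR; lra).
  assert (h2y : 0 < 2 / y) by (apply Rdiv_lt_0_compat; lra).
  destruct (approximation_near y eta u v hy heta hv1 ltac:(lra) happ) as [huv hu].
  assert (hvB : IZR v <= IZR v ^ (2 * B)).
  { rewrite <- (pow_1 (IZR v)) at 1. apply Rle_pow; [lra | lia]. }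
  destruct (Q_bracket N (IZR v ^ (2 * B))) as [n [hn hbr]]; [lra|].
  apply hndiv.
  apply (divide_of_Rpower_eq u v (p n) (Q n) a b); auto using Q_pos; try lia.
  apply (approx_pow_eq_of_close a b u v n L1 L2); fold A B; auto; try lra.
  - apply Herr. lia.
  - apply Hfast. lia.
  - rewrite <- hyb. apply Rle_trans with (L2 * Rabs (IZR u / IZR v - y)); [apply Hlip; lra|].
    apply Rmult_le_compat_l; [lra|]. rewrite Rabs_minus_sym.
    apply IZR_le in hv1. unfold eta in happ. rewrite Rpower_Ropp, Rpower_pow in happ by lra.
    exact happ.
Qed.

Lemma integral_power_Liouville_of_approx : integral_power_Liouville zeta.
Proof.
  pose proof zeta_pos as hz.
  split; [|split; [exact hz|]].
  { pose proof (Liouville_int_pow 1 ltac:(lia)) as h. rewrite Rpower_1 in h; assumption. }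
  intros a b ha hb. unfold fab. rewrite ratio_integral_iff_divide by exact hb. split.
  - intros HL. apply NNPP. intros hndiv.
    destruct (Z_lt_le_dec 0 b) as [hb' | hb'].
    + exact (not_Liouville_ratio_pow a b ha hb' hndiv HL).
    + apply (not_Liouville_ratio_pow (- a) (- b)); try lia.
      * intros hd. apply hndiv. now rewrite Z.divide_opp_l, Z.divide_opp_r in hd.
      * rewrite !opp_IZR. replace (- IZR a / - IZR b) with (IZR a / IZR b)
          by (field; apply not_0_IZR; exact hb). exact HL.
  - intros [k ->]. rewrite mult_IZR.
    replace (IZR k * IZR b / IZR b) with (IZR k) by (field; apply not_0_IZR; exact hb).
    apply Liouville_int_pow. intros ->. lia.
Qed.

End LiouvilleCriterion.

(** * The construction *)

Lemma INR_le_pow3 m : INR m <= 3 ^ m.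
Proof.
  induction m as [|m IH]; [simpl; lra|].
  rewrite S_INR. simpl. pose proof (pow_R1_Rle 3 m ltac:(lra)). lra.
Qed.

Section Construction.

Variables (c rad : R) (f : nat -> R).
Hypothesis c_pos : 0 < c.
Hypothesis rad_pos : 0 < rad.

Fixpoint expo n : nat :=
  match n with
  | 0 => S (Z.to_nat (up (10 / rad)))
  | S m => (S (S m) * expo m)%nat
  end.

Definition den n : Z := (3 ^ Z.of_nat (expo n))%Z.

Definition start : Z := (up (c * IZR (den 0)) - 1)%Z.

(* Each step adds [1/den (S m)] or [2/den (S m)] to the approximation, the larger step
   exactly when [f m] lies in the window that the smaller step would leave for the limit. *)
Fixpoint num n : Z :=
  match n with
  | 0 => (2 * start + 1)%Z
  | S m =>
      let r := IZR (num m) / IZR (2 * den m) + 1 / IZR (den (S m)) in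
      let step := if excluded_middle_informative (r <= f m <= r + 4 / IZR (den (S (S m))))
                  then 4%Z else 2%Z in
      (num m * 3 ^ Z.of_nat (expo (S m) - expo m) + step)%Z
  end.

Lemma expo_ge n : (S n <= expo n)%nat.
Proof. induction n as [|n IH]; simpl; [lia | nia]. Qed.

Lemma expo_le_succ n : (expo n <= expo (S n))%nat.
Proof. simpl. nia. Qed.

Lemma den_IZR n : IZR (den n) = 3 ^ expo n.
Proof. unfold den. rewrite <- pow_IZR. reflexivity. Qed.

Lemma den_odd n : Z.odd (den n) = true.
Proof. apply odd_pow_nat. reflexivity. Qed.

Lemma den_ge n : INR (S n) <= IZR (den n).
Proof. rewrite den_IZR. eapply Rle_trans; [apply le_INR, expo_ge | apply INR_le_pow3]. Qed.

Lemma den_ge_3 n : 3 <= IZR (den n).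
Proof.
  rewrite den_IZR. pose proof (expo_ge n).
  rewrite <- (pow_1 3) at 1. apply Rle_pow; [lra | lia].
Qed.

Lemma den_succ n : IZR (den (S n)) = IZR (den n) ^ S (S n).
Proof. rewrite !den_IZR, <- pow_mult. f_equal. simpl expo. lia. Qed.

Lemma den_sq_le n : IZR (den n) ^ 2 <= IZR (den (S n)).
Proof. rewrite den_succ. apply Rle_pow; [pose proof (den_ge_3 n); lra | lia]. Qed.

Lemma den_le_succ n : (den n <= den (S n))%Z.
Proof. apply Z.pow_le_mono_r; [lia|]. pose proof (expo_le_succ n). lia. Qed.

Lemma den_split n : den (S n) = (den n * 3 ^ Z.of_nat (expo (S n) - expo n))%Z.
Proof. unfold den. rewrite <- Z.pow_add_r by lia. f_equal. pose proof (expo_le_succ n). lia. Qed.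

Lemma den_fast (T : nat) (K : R) :
  exists N, forall n, (N <= n)%nat -> K * IZR (den n) ^ T <= IZR (den (S n)).
Proof.
  destruct (INR_eventually_gt K) as [N HN]. exists (max N T). intros n hn.
  specialize (HN n ltac:(lia)).
  pose proof (den_ge_3 n). pose proof (den_ge n). rewrite S_INR in *.
  rewrite den_succ. replace (S (S n)) with (T + (S (S n) - T))%nat by lia. rewrite pow_add.
  assert (IZR (den n) <= IZR (den n) ^ (S (S n) - T)).
  { rewrite <- (pow_1 (IZR (den n))) at 1. apply Rle_pow; [lra | lia]. }
  assert (0 < IZR (den n) ^ T) by (apply pow_lt; lra).
  rewrite Rmult_comm. apply Rmult_le_compat_l; lra.
Qed.

Lemma num_pos_odd n : (0 < num n)%Z /\ Z.odd (num n) = true.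
Proof.
  induction n as [|n [hpos hodd]].
  - assert (hs : (0 <= start)%Z).
    { pose proof (den_ge_3 0). destruct (archimed (c * IZR (den 0))) as [h _].
      assert (0 < IZR (up (c * IZR (den 0)))) as h' by nra. apply lt_IZR in h'.
      unfold start. lia. }
    change (num 0) with (2 * start + 1)%Z.
    split; [lia|]. rewrite Z.odd_add, Z.odd_mul. reflexivity.
  - assert (h3 : (0 < 3 ^ Z.of_nat (expo (S n) - expo n))%Z) by (apply Z.pow_pos_nonneg; lia).
    assert (Z.odd (num n * 3 ^ Z.of_nat (expo (S n) - expo n)) = true)
      by (rewrite Z.odd_mul, hodd, odd_pow_nat; reflexivity).
    cbn [num]. destruct excluded_middle_informative; (split; [nia | rewrite Z.odd_add; now rewrite H]).
Qed.

Notation r := (approx num den).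

Lemma approx_succ n :
  let b := r n + 1 / IZR (den (S n)) in
  (b <= f n <= b + 4 / IZR (den (S (S n))) /\ r (S n) = r n + 2 / IZR (den (S n))) \/
  (~ (b <= f n <= b + 4 / IZR (den (S (S n)))) /\ r (S n) = b).
Proof.
  pose proof (den_ge_3 n). pose proof (den_ge_3 (S n)).
  assert (E : forall e, IZR (num n * 3 ^ Z.of_nat (expo (S n) - expo n) + e) / IZR (2 * den (S n))
                        = r n + IZR e / 2 / IZR (den (S n))).
  { intros e. unfold approx. rewrite den_split, !mult_IZR, plus_IZR, mult_IZR.
    assert (0 < IZR (3 ^ Z.of_nat (expo (S n) - expo n))) by (apply IZR_lt, Z.pow_pos_nonneg; lia).
    field. lra. }
  cbv zeta. change (r (S n)) with (IZR (num (S n)) / IZR (2 * den (S n))).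
  cbn [num]. fold (r n).
  destruct excluded_middle_informative as [h | h]; [left | right]; (split; [exact h|]);
    rewrite E; unfold Rdiv; field; lra.
Qed.

Lemma approx_step_bounds n : r n < r (S n) <= r n + 2 / IZR (den (S n)).
Proof.
  pose proof (den_ge_3 (S n)).
  assert (0 < 1 / IZR (den (S n))) by (apply Rdiv_lt_0_compat; lra).
  destruct (approx_succ n) as [[_ ->] | [_ ->]]; lra.
Qed.

Lemma four_over_den_lt n : 4 / IZR (den (S (S n))) < 1 / IZR (den (S n)).
Proof.
  pose proof (den_sq_le (S n)). pose proof (den_sq_le n). pose proof (den_ge_3 n).
  assert (h9 : 9 <= IZR (den (S n))) by nra.
  apply Rmult_lt_reg_r with (IZR (den (S (S n))) * IZR (den (S n))); [nra|].
  replace (4 / IZR (den (S (S n))) * (IZR (den (S (S n))) * IZR (den (S n))))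
    with (4 * IZR (den (S n))) by (field; nra).
  replace (1 / IZR (den (S n)) * (IZR (den (S (S n))) * IZR (den (S n))))
    with (IZR (den (S (S n)))) by (field; nra).
  nra.
Qed.

Lemma approx_tail n m : (n <= m)%nat ->
  r m <= r n + 4 / IZR (den (S n)) - 4 / IZR (den (S m)).
Proof.
  induction 1 as [|m _ IH]; [lra|].
  pose proof (approx_step_bounds m). pose proof (four_over_den_lt m). lra.
Qed.

Lemma approx_limit : exists zeta, (forall n, r n < zeta) /\
  (forall n, zeta - r n <= 4 / IZR (den (S n))).
Proof.
  assert (hpos : forall n, 0 < 4 / IZR (den n))
    by (intros n; pose proof (den_ge_3 n); apply Rdiv_lt_0_compat; lra).
  assert (hgrow : Un_growing r) by (intros n; left; apply approx_step_bounds).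
  assert (hub : has_ub r).
  { exists (r 0 + 4 / IZR (den 1)). intros x [m ->].
    pose proof (approx_tail 0 m ltac:(lia)). pose proof (hpos (S m)). lra. }
  destruct (growing_cv r hgrow hub) as [zeta hcv].
  pose proof (growing_ineq r zeta hgrow hcv) as hle.
  exists zeta. split.
  - intros n. pose proof (approx_step_bounds n). pose proof (hle (S n)). lra.
  - intros n. apply Rnot_lt_le. intros hlt.
    destruct (hcv (zeta - (r n + 4 / IZR (den (S n))))) as [N HN]; [lra|].
    specialize (HN (max N n) ltac:(lia)). unfold Rdist in HN.
    pose proof (approx_tail n (max N n) ltac:(lia)).
    pose proof (hpos (S (max N n))). pose proof (hle (max N n)).
    rewrite Rabs_left1 in HN by lra. lra.
Qed.

Section Limit.

Variable zeta : R.
Hypothesis approx_lt : forall n, r n < zeta.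
Hypothesis approx_error : forall n, zeta - r n <= 4 / IZR (den (S n)).

(* [r 0] is the midpoint [(start + 1/2) / den 0] of a cell of width [1 / den 0] containing [c],
   and [den 0 > 10 / rad]. *)
Lemma limit_near_center : Rabs (zeta - c) < rad.
Proof.
  pose proof (approx_lt 0) as h0. pose proof (approx_error 0) as h1.
  pose proof (den_ge_3 0). pose proof (den_sq_le 0).
  assert (hk : 10 / rad < IZR (den 0)).
  { rewrite den_IZR. eapply Rlt_le_trans; [|apply INR_le_pow3].
    cbn [expo]. rewrite S_INR. destruct (archimed (10 / rad)) as [ha _].
    destruct (Z.leb_spec 0 (up (10 / rad))) as [hu | hu].
    - rewrite INR_IZR_INZ, Z2Nat.id by exact hu. lra.
    - apply IZR_lt in hu. pose proof (pos_INR (Z.to_nat (up (10 / rad)))). lra. }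
  assert (hk' : 10 < rad * IZR (den 0)).
  { apply Rmult_lt_compat_l with (r := rad) in hk; [|exact rad_pos].
    replace (rad * (10 / rad)) with 10 in hk by (field; lra). exact hk. }
  assert (h4 : 4 / IZR (den 1) <= 4 / IZR (den 0)).
  { unfold Rdiv. apply Rmult_le_compat_l; [lra|]. apply Rinv_le_contravar; nra. }
  destruct (archimed (c * IZR (den 0))) as [a1 a2].
  assert (hs : IZR start <= c * IZR (den 0) < IZR start + 1) by (unfold start; rewrite minus_IZR; lra).
  assert (hr0 : Rabs (r 0 - c) <= / 2 / IZR (den 0)).
  { replace (r 0 - c) with ((IZR start + / 2 - c * IZR (den 0)) / IZR (den 0))
      by (unfold approx; cbn [num]; rewrite plus_IZR, !mult_IZR; field; lra).
    unfold Rdiv. rewrite Rabs_mult, (Rabs_pos_eq (/ IZR (den 0))) by (left; apply Rinv_0_lt_compat; lra).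
    apply Rmult_le_compat_r; [left; apply Rinv_0_lt_compat; lra|]. apply Rabs_le. lra. }
  assert ((9 / 2) / IZR (den 0) < rad).
  { apply Rmult_lt_reg_r with (IZR (den 0)); [lra|].
    replace (9 / 2 / IZR (den 0) * IZR (den 0)) with (9 / 2) by (field; lra). lra. }
  replace (zeta - c) with ((zeta - r 0) + (r 0 - c)) by ring.
  apply Rle_lt_trans with (1 := Rabs_triang _ _).
  rewrite (Rabs_pos_eq (zeta - r 0)) by lra.
  assert (/ 2 / IZR (den 0) + 4 / IZR (den 0) = (9 / 2) / IZR (den 0)) by (field; lra).
  lra.
Qed.

Lemma limit_avoids n : zeta <> f n.
Proof.
  intros e.
  pose proof (approx_lt (S n)). pose proof (approx_error (S n)).
  pose proof (four_over_den_lt n).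
  destruct (approx_succ n) as [[hwin hstep] | [hwin hstep]]; rewrite hstep in *.
  - lra.
  - apply hwin. lra.
Qed.

End Limit.

Lemma construction : exists zeta, integral_power_Liouville zeta /\
  Rabs (zeta - c) < rad /\ forall n, zeta <> f n.
Proof.
  destruct approx_limit as [zeta [hlt herr]].
  exists zeta. split; [|split; [apply limit_near_center | apply limit_avoids]]; auto.
  apply (integral_power_Liouville_of_approx num den); auto.
  - intros n. apply num_pos_odd.
  - intros n. apply num_pos_odd.
  - exact den_odd.
  - exact den_ge.
  - exact den_le_succ.
  - exact den_fast.
  - intros n. apply approx_step_bounds.
Qed.

End Construction.

Theorem theorem6p2 :
  (forall I : R -> Prop,
     (forall x, I x -> 0 < x) ->
     nonempty_interior I ->
     uncountable (fun zeta =>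
       Liouville zeta /\ I zeta /\
       forall a b : Z, a <> 0%Z -> b <> 0%Z ->
         (Liouville (fab a b zeta) <-> exists k : Z, IZR a / IZR b = IZR k)))
  /\
  (forall a b : Z, a <> 0%Z -> b <> 0%Z -> Z.gcd a b = 1%Z -> (2 <= Z.abs b)%Z ->
     uncountable (fun y => Liouville y /\
                    exists z, Liouville z /\ 0 < z /\ y = fab a b z)
     /\
     ~ (forall z, Liouville z -> 0 < z -> Liouville (fab a b z))).
Proof.
  split.
  - intros I hpos [c [rad [hrad hI]]] [g hg].
    assert (hc : 0 < c) by (apply hpos, hI; rewrite Rminus_diag, Rabs_R0; exact hrad).
    destruct (construction c rad g hc hrad) as [zeta [[hL [_ hfab]] [hball havoid]]].
    destruct (hg zeta (conj hL (conj (hI zeta hball) hfab))) as [n hn].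
    exact (havoid n (eq_sym hn)).
  - intros a b ha hb hgcd hb2.
    assert (hfab : forall k z, fab k 1 z = Rpower z (IZR k)) by (intros; unfold fab; f_equal; field).
    assert (hint : forall zeta k, integral_power_Liouville zeta -> k <> 0%Z ->
                   Liouville (Rpower zeta (IZR k))).
    { intros zeta k [_ [_ H]] hk. rewrite <- hfab. apply H; [exact hk | lia |].
      exists k. field. }
    split.
    + intros [g hg].
      destruct (construction 1 1 (fun n => Rpower (g n) (/ IZR a))) as [zeta [hz [_ havoid]]]; try lra.
      destruct (hg (Rpower zeta (IZR a))) as [n hn].
      * split; [now apply hint|]. exists (Rpower zeta (IZR b)).
        split; [now apply hint|]. split; [apply Rpower_pos|].
        unfold fab. rewrite Rpower_mult. f_equal. field. apply not_0_IZR. exact hb.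
      * apply (havoid n). rewrite hn, Rpower_mult, Rinv_r, Rpower_1; [reflexivity | |].
        -- destruct hz as [_ [hz _]]. exact hz.
        -- apply not_0_IZR. exact ha.
    + intros H.
      destruct (construction 1 1 (fun _ => 0)) as [zeta [[hL [hz hfabz]] _]]; try lra.
      specialize (H zeta hL hz). apply hfabz in H; [|exact ha | exact hb].
      rewrite ratio_integral_iff_divide in H by exact hb.
      assert (hb1 : (b | 1)%Z) by (rewrite <- hgcd; apply Z.gcd_greatest; [exact H | apply Z.divide_refl]).
      apply Z.divide_1_r in hb1. lia.
Qed.
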